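(* Let $(\mathscr C,A,\psi)$ be an entwining structure. For $\sigma\in V_1$ define $\alpha(\sigma)=\tau$ by $\tau(\mathcal M)(X):\mathcal M(X)\otimes A\to\mathcal M(X)$, $m\otimes a\mapsto m_{X0}\,\sigma_X(m_{X1}\otimes a)$, for $\mathcal M\in Com^{\mathscr C}$ and $X\in Ob(\mathscr C)$. Then $\alpha$ is a linear isomorphism from $V_1$ onto the space $Nat(G_\psi F_\psi,\mathrm{id}_{Com^{\mathscr C}})$ of natural transformations, whose inverse sends $\tau$ to the family $\sigma_X=\epsilon_X\circ\tau(\mathcal H_X)(X):\mathscr C(X,X)\otimes A\to K$. In particular $V_1\cong Nat(G_\psi F_\psi,\mathrm{id}_{Com^{\mathscr C}})$.
   Context: $K$ is a field. A $K$-coalgebra with several objects $\mathscr C$: a set $Ob(\mathscr C)$, vector spaces $\mathscr C(X,Y)$, linear comultiplications $\delta_{XYZ}:\mathscr C(X,Z)\to\mathscr C(Y,Z)\otimes\mathscr C(X,Y)$, $\delta_{XYZ}(f)=f_{Y1}\otimes f_{Y2}$, and counits $\epsilon_X:\mathscr C(X,X)\to K$, with $(\delta_{YWZ}\otimes\mathrm{id})\delta_{XYZ}=(\mathrm{id}\otimes\delta_{XYW})\delta_{XWZ}$ and $(\epsilon_Y\otimes\mathrm{id})\delta_{XYY}=\mathrm{id}=(\mathrm{id}\otimes\epsilon_X)\delta_{XXY}$. For a $K$-algebra $A$ (multiplication $\mu_A$), an entwining structure $(\mathscr C,A,\psi)$ is a family of linear maps $\psi_{XY}:\mathscr C(X,Y)\otimes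 A\to A\otimes\mathscr C(X,Y)$, $\psi_{XY}(f\otimes a)=a_\psi\otimes f^\psi$, with (i) $(\mathrm{id}_A\otimes\delta_{XYZ})\psi_{XZ}=(\psi_{YZ}\otimes\mathrm{id})(\mathrm{id}\otimes\psi_{XY})(\delta_{XYZ}\otimes\mathrm{id}_A)$; (ii) $\psi_{XZ}(\mathrm{id}\otimes\mu_A)=(\mu_A\otimes\mathrm{id})(\mathrm{id}_A\otimes\psi_{XZ})(\psi_{XZ}\otimes\mathrm{id}_A)$; (iii) $\psi_{XZ}(f\otimes1)=1\otimes f$; (iv) $\epsilon_Z(g^\psi)a_\psi=\epsilon_Z(g)a$. $Com^{\mathscr C}$: right $\mathscr C$-comodules $\mathcal M$ (spaces $\mathcal M(X)$, coactions $\rho_{XY}(m)=m_{Y0}\otimes m_{Y1}\in\mathcal M(Y)\otimes\mathscr C(X,Y)$ with $(\rho_{ZY}\otimes\mathrm{id})\rho_{XZ}=(\mathrm{id}\otimes\delta_{XZY})\rho_{XY}$, $(\mathrm{id}\otimes\epsilon_X)\rho_{XX}=\mathrm{id}$) and coaction-compatible families of linear maps. $Com^{\mathscr C}_A(\psi)$: entwined comodules, i.e. comodules with right $A$-module structures on each $\mathcal M(X)$ such that $\rho_{XY}(ma)=m_{Y0}a_\psi\otimes(m_{Y1})^\psi$, with $A$-linear comodule morphisms. $F_\psi(\mathcal M)=\mathcal M\otimes A$ with $(\mathcal M\otimes A)(X)=\mathcal M(X)\otimes A$, $(m\otimes a)b=m\otimes ab$, coaction $m\otimes a\mapsto m_{Y0}\otimes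 a_\psi\otimes(m_{Y1})^\psi$; $G_\psi$ is the forgetful functor. $\mathcal H_X$ is the comodule with $\mathcal H_X(Y)=\mathscr C(Y,X)$ and coactions $\delta_{YZX}$. $V_1$ is the vector space of families $\sigma=\{\sigma_X:\mathscr C(X,X)\otimes A\to K\}_{X\in Ob(\mathscr C)}$ of linear maps such that $\sigma_Y(f_{Y1}\otimes a_\psi)f_{Y2}^\psi=\sigma_X(f_{X2}\otimes a)f_{X1}$ in $\mathscr C(X,Y)$ for all $f\in\mathscr C(X,Y)$, $a\in A$, $X,Y\in Ob(\mathscr C)$, where $a_\psi\otimes f_{Y2}^\psi=\psi_{XY}(f_{Y2}\otimes a)$. *)

(* Tensor products are not available in MathComp for
   arbitrary (possibly infinite-dimensional) K-vector spaces, so an element of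
   U (x) V is represented by a finite list of pure tensors (a finite sum
   sum_i u_i (x) v_i), and two such lists are equal *as tensors* iff every
   bilinear map out of U x V (into any K-vector space) takes the same value on
   them (universal property of the tensor product).  Linear maps out of a
   tensor product U (x) V are represented by bilinear maps U -> V -> W. *)
From HB Require Import structures.
From mathcomp Require Import all_boot all_algebra.
Unset Printing Implicit Defensive.
Import GRing.Theory.
Local Open Scope ring_scope.

Section MultiCoalgebra.
Variable K : fieldType.

Definition bilinear_map {U V W : lmodType K} (phi : U -> V -> W) : Prop :=
  (forall (k : K) u u' v, phi (k *: u + u') v = k *: phi u v + phi u' v) /\
  (forall (k : K) u v v', phi u (k *: v + v') = k *: phi u v + phi u v').

Definition bilinear_form {U V : lmodType K} (phi : U -> V -> K) : Prop :=
  (forall (k : K) u u' v, phi (k *: u + u') v = k * phi u v + phi u' v) /\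
  (forall (k : K) u v v', phi u (k *: v + v') = k * phi u v + phi u v').

Definition trilinear_map {U V T W : lmodType K} (phi : U -> V -> T -> W) : Prop :=
  (forall (k : K) u u' v t, phi (k *: u + u') v t = k *: phi u v t + phi u' v t) /\
  (forall (k : K) u v v' t, phi u (k *: v + v') t = k *: phi u v t + phi u v' t) /\
  (forall (k : K) u v t t', phi u v (k *: t + t') = k *: phi u v t + phi u v t').

Definition teq2 {U V : lmodType K} (s t : seq (U * V)) : Prop :=
  forall (W : lmodType K) (phi : U -> V -> W), bilinear_map phi ->
    \sum_(p <- s) phi p.1 p.2 = \sum_(p <- t) phi p.1 p.2.

Definition teq3 {U V T : lmodType K} (s t : seq (U * V * T)) : Prop :=
  forall (W : lmodType K) (phi : U -> V -> T -> W), trilinear_map phi ->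
    \sum_(p <- s) phi p.1.1 p.1.2 p.2 = \sum_(p <- t) phi p.1.1 p.1.2 p.2.

Definition tscale {U : lmodType K} {V : Type} (k : K) (s : seq (U * V)) :
  seq (U * V) := [seq (k *: p.1, p.2) | p <- s].

Record mcoalgebra := MCoalgebra {
  ob : Type;
  mhom : ob -> ob -> lmodType K;
  (* delta X Y Z f = f_{Y1} (x) f_{Y2} in C(Y,Z) (x) C(X,Y) *)
  delta : forall X Y Z : ob, mhom X Z -> seq (mhom Y Z * mhom X Y);
  eps : forall X : ob, mhom X X -> K;
  delta_lin : forall (X Y Z : ob) (k : K) (f g : mhom X Z),
    teq2 (delta X Y Z (k *: f + g)) (tscale k (delta X Y Z f) ++ delta X Y Z g);
  eps_lin : forall (X : ob) (k : K) (f g : mhom X X),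
    eps X (k *: f + g) = k * eps X f + eps X g;
  coassoc : forall (X Y W Z : ob) (f : mhom X Z),
    teq3 (flatten [seq [seq (q.1, q.2, p.2) | q <- delta Y W Z p.1]
                  | p <- delta X Y Z f])
         (flatten [seq [seq (p.1, q.1, q.2) | q <- delta X Y W p.2]
                  | p <- delta X W Z f]);
  counitL : forall (X Y : ob) (f : mhom X Y),
    \sum_(p <- delta X Y Y f) eps Y p.1 *: p.2 = f;
  counitR : forall (X Y : ob) (f : mhom X Y),
    \sum_(p <- delta X X Y f) eps X p.2 *: p.1 = f
}.

(* Entwining structure (C, A, psi); psi X Y f a = a_psi (x) f^psi *)
Record entwining (C : mcoalgebra) (A : algType K) := Entwining {
  psi : forall X Y : ob C, mhom C X Y -> A -> seq (A * mhom C X Y);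
  psi_linl : forall (X Y : ob C) (k : K) (f g : mhom C X Y) (a : A),
    teq2 (psi X Y (k *: f + g) a) (tscale k (psi X Y f a) ++ psi X Y g a);
  psi_linr : forall (X Y : ob C) (f : mhom C X Y) (k : K) (a b : A),
    teq2 (psi X Y f (k *: a + b)) (tscale k (psi X Y f a) ++ psi X Y f b);
  ent_delta : forall (X Y Z : ob C) (f : mhom C X Z) (a : A),
    teq3 (flatten [seq [seq (p.1, q.1, q.2) | q <- delta C X Y Z p.2]
                  | p <- psi X Z f a])
         (flatten [seq flatten [seq [seq (r.1, r.2, q.2) | r <- psi Y Z p.1 q.1]
                               | q <- psi X Y p.2 a]
                  | p <- delta C X Y Z f]);
  ent_mul : forall (X Z : ob C) (f : mhom C X Z) (a b : A),
    teq2 (psi X Z f (a * b))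
         (flatten [seq [seq (p.1 * q.1, q.2) | q <- psi X Z p.2 b]
                  | p <- psi X Z f a]);
  ent_one : forall (X Z : ob C) (f : mhom C X Z), teq2 (psi X Z f 1) [:: (1, f)];
  ent_eps : forall (Z : ob C) (g : mhom C Z Z) (a : A),
    \sum_(p <- psi Z Z g a) eps C Z p.2 *: p.1 = eps C Z g *: a
}.
Arguments psi {C A}.

(* right C-comodules; rho X Y m = m_{Y0} (x) m_{Y1} in M(Y) (x) C(X,Y) *)
Record comodule (C : mcoalgebra) := Comodule {
  cm : ob C -> lmodType K;
  rho : forall X Y : ob C, cm X -> seq (cm Y * mhom C X Y);
  rho_lin : forall (X Y : ob C) (k : K) (m n : cm X),
    teq2 (rho X Y (k *: m + n)) (tscale k (rho X Y m) ++ rho X Y n);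
  rho_coassoc : forall (X Z Y : ob C) (m : cm X),
    teq3 (flatten [seq [seq (q.1, q.2, p.2) | q <- rho Z Y p.1]
                  | p <- rho X Z m])
         (flatten [seq [seq (p.1, q.1, q.2) | q <- delta C X Z Y p.2]
                  | p <- rho X Y m]);
  rho_counit : forall (X : ob C) (m : cm X),
    \sum_(p <- rho X X m) eps C X p.2 *: p.1 = m
}.
Arguments cm {C}.
Arguments rho {C}.

Definition comodule_morphism {C : mcoalgebra} {M N : comodule C}
    (g : forall X : ob C, cm M X -> cm N X) : Prop :=
  (forall (X : ob C) (k : K) (m m' : cm M X), g X (k *: m + m') = k *: g X m + g X m') /\
  (forall (X Y : ob C) (m : cm M X),
     teq2 (rho N X Y (g X m)) [seq (g Y p.1, p.2) | p <- rho M X Y m]).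

Definition Hcomod {C : mcoalgebra} (X : ob C) : comodule C :=
  @Comodule C (fun Y => mhom C Y X) (fun Y Z f => delta C Y Z X f)
    (fun Y Z k f g => delta_lin C Y Z X k f g)
    (fun Y Z W m => coassoc C Y Z W X m)
    (fun Y m => counitR C Y X m).

Section Entw.
Variables (C : mcoalgebra) (A : algType K) (E : entwining C A).

(* A family of linear maps tau(M)(X) : M(X) (x) A -> M(X), given as bilinear maps *)
Definition nat_family := forall (M : comodule C) (X : ob C), cm M X -> A -> cm M X.

Definition is_nat (tau : nat_family) : Prop :=
  (forall (M : comodule C) (X : ob C), bilinear_map (tau M X)) /\
  (* each tau(M) is a morphism of comodules G_psi F_psi (M) = M (x) A -> M *)
  (forall (M : comodule C) (X Y : ob C) (m : cm M X) (a : A),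
     teq2 (rho M X Y (tau M X m a))
          (flatten [seq [seq (tau M Y p.1 q.1, q.2) | q <- psi E X Y p.2 a]
                   | p <- rho M X Y m])) /\
  (forall (M N : comodule C) (g : forall X : ob C, cm M X -> cm N X),
     comodule_morphism g ->
     forall (X : ob C) (m : cm M X) (a : A), tau N X (g X m) a = g X (tau M X m a)).

Definition sigma_family := forall X : ob C, mhom C X X -> A -> K.

Definition in_V1 (sigma : sigma_family) : Prop :=
  (forall X : ob C, bilinear_form (sigma X)) /\
  (forall (X Y : ob C) (f : mhom C X Y) (a : A),
     \sum_(p <- delta C X Y Y f) \sum_(q <- psi E X Y p.2 a) sigma Y p.1 q.1 *: q.2
     = \sum_(p <- delta C X X Y f) sigma X p.2 a *: p.1).

Definition alpha (sigma : sigma_family) : nat_family :=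
  fun M X m a => \sum_(p <- rho M X X m) sigma X p.2 a *: p.1.

Definition beta (tau : nat_family) : sigma_family :=
  fun X f a => eps C X (tau (Hcomod X) X f a).

End Entw.
End MultiCoalgebra.

Arguments ob {K}.
Arguments mhom {K}.
Arguments delta {K}.
Arguments eps {K}.
Arguments entwining {K}.
Arguments psi {K C A}.
Arguments comodule {K}.
Arguments cm {K C}.
Arguments rho {K C}.
Arguments comodule_morphism {K C M N}.
Arguments Hcomod {K C}.
Arguments nat_family {K}.
Arguments is_nat {K C A}.
Arguments sigma_family {K}.
Arguments in_V1 {K C A}.
Arguments alpha {K C A}.
Arguments beta {K C A}.

(* A natural transformation tau is determined by its components on the comodules H_X.  For a
   comodule M, the coaction m |-> m_{X0} (x) m_{X1} is a comodule morphism from M to the cofree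
   comodule M(X) (x) H_X, and so is v (x) - from H_X, for every v in M(X).  Naturality along
   both, followed by id (x) eps_X, gives tau(M)(m (x) a) = m_{X0} eps_X(tau(H_X)(m_{X1} (x) a)),
   that is alpha(beta tau) = tau.  Conversely, by coassociativity of the coaction the defining
   identity of V_1 is exactly what makes alpha(sigma)(M) colinear, and beta(alpha sigma) = sigma
   is the counit law of the coalgebra. *)
From HB Require Import structures.
From mathcomp Require Import all_boot all_algebra.
From mathcomp Require Import boolp.
Import GRing.Theory.
Local Open Scope ring_scope.
Set Implicit Arguments.
Unset Strict Implicit.

Lemma big_flatten_map (I J T : Type) (W : nmodType) (s : seq I) (F : I -> seq J)
    (g : I -> J -> T) (G : T -> W) :
  \sum_(p <- flatten [seq [seq g i j | j <- F i] | i <- s]) G p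
  = \sum_(i <- s) \sum_(j <- F i) G (g i j).
Proof. by rewrite big_flatten big_map; apply: eq_bigr => i _; rewrite big_map. Qed.

Section Multilinear.
Variable K : fieldType.

Lemma linear_for_sum (U : lmodType K) (W : zmodType) (s : GRing.Scale.law K W)
    (f : U -> W) (I : Type) (r : seq I) (F : I -> U) :
  linear_for s f -> f (\sum_(i <- r) F i) = \sum_(i <- r) f (F i).
Proof.
move=> f_lin.
exact: (raddf_sum (HB.pack f (GRing.isLinear.Build K U W s f f_lin) : {linear U -> W | s})).
Qed.

Lemma linear_comp (U V W : lmodType K) (f : U -> V) (g : V -> W) :
  linear f -> linear g -> linear (fun x => g (f x)).
Proof. by move=> f_lin g_lin k x y; rewrite f_lin g_lin. Qed.

Lemma linear_scale (U W : lmodType K) (c : K) (f : U -> W) :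
  linear f -> linear (fun x => c *: f x).
Proof. by move=> f_lin k x y; rewrite f_lin scalerDr !scalerA mulrC. Qed.

Lemma linear_big (U W : lmodType K) (I : Type) (r : seq I) (F : I -> U -> W) :
  (forall i, linear (F i)) -> linear (fun x => \sum_(i <- r) F i x).
Proof.
move=> F_lin k x y; rewrite scaler_sumr -big_split.
by apply: eq_bigr => i _; apply: F_lin.
Qed.

Lemma scalar_scale (U W : lmodType K) (f : U -> K) (w : W) :
  scalar f -> linear (fun x => f x *: w).
Proof. by move=> f_lin k x y; rewrite f_lin scalerDl scalerA. Qed.

Section Bilinear.
Variables (U V W : lmodType K).

Lemma mk_bilinear_map (phi : U -> V -> W) :
  (forall v, linear (phi^~ v)) -> (forall u, linear (phi u)) -> bilinear_map K phi.
Proof. by move=> phil phir; split=> k *; [apply: phil | apply: phir]. Qed.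

Variables (phi : U -> V -> W) (phi_bil : bilinear_map K phi).

Lemma bilinear_mapl v : linear (phi^~ v).
Proof. by move=> k x y; rewrite phi_bil.1. Qed.

Lemma bilinear_mapr u : linear (phi u).
Proof. by move=> k x y; rewrite phi_bil.2. Qed.

Lemma bilinearZl k u v : phi (k *: u) v = k *: phi u v.
Proof. exact: (scalable_linear (bilinear_mapl v)). Qed.

Lemma bilinearZr k u v : phi u (k *: v) = k *: phi u v.
Proof. exact: (scalable_linear (bilinear_mapr u)). Qed.

Lemma bilinear_suml (I : Type) (r : seq I) (F : I -> U) v :
  phi (\sum_(i <- r) F i) v = \sum_(i <- r) phi (F i) v.
Proof. exact: (linear_for_sum _ _ (bilinear_mapl v)). Qed.

Lemma bilinear_sumr (I : Type) (r : seq I) (F : I -> V) u :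
  phi u (\sum_(i <- r) F i) = \sum_(i <- r) phi u (F i).
Proof. exact: (linear_for_sum _ _ (bilinear_mapr u)). Qed.

Lemma big_tscale k (s : seq (U * V)) :
  \sum_(p <- tscale K k s) phi p.1 p.2 = k *: \sum_(p <- s) phi p.1 p.2.
Proof. by rewrite big_map scaler_sumr; apply: eq_bigr => p _; rewrite bilinearZl. Qed.

End Bilinear.

Lemma bilinear_scalel {U V : lmodType K} (f : U -> K) :
  scalar f -> bilinear_map K (fun u (v : V) => f u *: v).
Proof.
move=> f_lin; apply: mk_bilinear_map => [v|u]; first exact: scalar_scale.
by move=> k x y; rewrite scalerDr !scalerA mulrC.
Qed.

Lemma bilinear_scaler {U V : lmodType K} (f : V -> K) :
  scalar f -> bilinear_map K (fun (u : U) v => f v *: u).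
Proof.
move=> f_lin; apply: mk_bilinear_map => [v|u]; last exact: scalar_scale.
by move=> k x y; rewrite scalerDr !scalerA mulrC.
Qed.

Lemma bilinear_forml (U V : lmodType K) (phi : U -> V -> K) :
  bilinear_form K phi -> forall v, scalar (phi^~ v).
Proof. by move=> phi_bil v k x y; rewrite phi_bil.1. Qed.

Lemma bilinear_formr (U V : lmodType K) (phi : U -> V -> K) :
  bilinear_form K phi -> forall u, scalar (phi u).
Proof. by move=> phi_bil u k x y; rewrite phi_bil.2. Qed.

Section Trilinear.
Variables (U V T W : lmodType K) (phi : U -> V -> T -> W).

Lemma mk_trilinear_map :
  (forall v t, linear (fun u => phi u v t)) -> (forall u t, linear (fun v => phi u v t)) ->
  (forall u v, linear (phi u v)) -> trilinear_map K phi.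
Proof.
by move=> phi1 phi2 phi3; do ![split] => k *; [apply: phi1 | apply: phi2 | apply: phi3].
Qed.

Hypothesis phi_tri : trilinear_map K phi.

Lemma trilinear_map1 v t : linear (fun u => phi u v t).
Proof. by move=> k x y; rewrite phi_tri.1. Qed.

Lemma trilinear_map2 u t : linear (fun v => phi u v t).
Proof. by move=> k x y; rewrite phi_tri.2.1. Qed.

Lemma trilinear_map3 u v : linear (phi u v).
Proof. by move=> k x y; rewrite phi_tri.2.2. Qed.

Lemma trilinear_map12 t : bilinear_map K (fun u v => phi u v t).
Proof. by apply: mk_bilinear_map => [v|u]; [apply: trilinear_map1 | apply: trilinear_map2]. Qed.

End Trilinear.

Section TensorEquality.
Variables (U V : lmodType K).
Implicit Types s t : seq (U * V).

Lemma teq2_sym s t : teq2 K s t -> teq2 K t s.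
Proof. by move=> st W phi phi_bil; rewrite st. Qed.

Lemma teq2_trans s t r : teq2 K s t -> teq2 K t r -> teq2 K s r.
Proof. by move=> st tr W phi phi_bil; rewrite st // tr. Qed.

Lemma linear_big_teq2 (T W : lmodType K) (F : T -> seq (U * V)) (phi : U -> V -> W) :
  (forall k x y, teq2 K (F (k *: x + y)) (tscale K k (F x) ++ F y)) ->
  bilinear_map K phi -> linear (fun x => \sum_(q <- F x) phi q.1 q.2).
Proof. by move=> F_lin phi_bil k x y; rewrite (F_lin k x y _ _ phi_bil) big_cat big_tscale. Qed.

End TensorEquality.

Lemma big_rho_coassoc (C : mcoalgebra K) (M : comodule C) (X Z Y : ob C) (m : cm M X)
    (W : lmodType K) (phi : cm M Y -> mhom C Z Y -> mhom C X Z -> W) :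
  trilinear_map K phi ->
  \sum_(p <- rho M X Z m) \sum_(q <- rho M Z Y p.1) phi q.1 q.2 p.2
  = \sum_(p <- rho M X Y m) \sum_(q <- delta C X Z Y p.2) phi p.1 q.1 q.2.
Proof.
by move=> phi_tri; have := @rho_coassoc K C M X Z Y m W phi phi_tri; rewrite !big_flatten_map.
Qed.

End Multilinear.

Section TensorProduct.
Variables (K : fieldType) (U V : lmodType K).
Implicit Types s t : seq (U * V).

(* An element of U (x) V is the teq2-class of a finite list of pure tensors; the operations
   pick a representative list by choice. *)
Definition tensor := {P : seq (U * V) -> Prop | exists s, P = teq2 K s}.

Definition tensor_of s : tensor := exist _ (teq2 K s) (ex_intro _ s erefl).

Lemma tensor_of_eq s t : teq2 K s t -> tensor_of s = tensor_of t.
Proof.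
move=> st; apply: eq_exist; apply/funext => r; apply/propext.
by split; [apply: teq2_trans (teq2_sym st) | apply: teq2_trans st].
Qed.

Definition tensor_repr (c : tensor) : seq (U * V) := sval (cid (svalP c)).

Lemma tensor_reprK : cancel tensor_repr tensor_of.
Proof.
by case=> P P_teq2; rewrite /tensor_repr; case: cid => s /= P_s; apply: eq_exist.
Qed.

Lemma tensor_repr_of s : teq2 K (tensor_repr (tensor_of s)) s.
Proof. by have /(congr1 sval) /= -> := tensor_reprK (tensor_of s). Qed.

Lemma tensorP (c : tensor) : exists s, c = tensor_of s.
Proof. by exists (tensor_repr c); rewrite tensor_reprK. Qed.

Definition tensor_add (c d : tensor) := tensor_of (tensor_repr c ++ tensor_repr d).
Definition tensor_scale k (c : tensor) := tensor_of (tscale K k (tensor_repr c)).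

Lemma tensor_add_of s t : tensor_add (tensor_of s) (tensor_of t) = tensor_of (s ++ t).
Proof.
apply: tensor_of_eq => W phi phi_bil.
by rewrite !big_cat !(tensor_repr_of _ phi_bil).
Qed.

Lemma tensor_scale_of k s : tensor_scale k (tensor_of s) = tensor_of (tscale K k s).
Proof.
apply: tensor_of_eq => W phi phi_bil.
by rewrite !big_tscale // (tensor_repr_of _ phi_bil).
Qed.

Lemma tensor_addA : associative tensor_add.
Proof.
move=> a b c; case: (tensorP a) (tensorP b) (tensorP c) => [s ->] [t ->] [r ->].
by rewrite !tensor_add_of catA.
Qed.

Lemma tensor_addC : commutative tensor_add.
Proof.
move=> a b; case: (tensorP a) (tensorP b) => [s ->] [t ->].
by rewrite !tensor_add_of; apply: tensor_of_eq => W phi _; rewrite !big_cat; apply: addrC.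
Qed.

Lemma tensor_add0 : left_id (tensor_of [::]) tensor_add.
Proof. by move=> a; case: (tensorP a) => s ->; rewrite tensor_add_of. Qed.

Lemma tensor_addN : left_inverse (tensor_of [::]) (tensor_scale (-1)) tensor_add.
Proof.
move=> a; case: (tensorP a) => s ->; rewrite tensor_scale_of tensor_add_of.
apply: tensor_of_eq => W phi phi_bil.
by rewrite big_cat big_tscale // big_nil scaleN1r; apply: addNr.
Qed.

HB.instance Definition _ := gen_eqMixin tensor.
HB.instance Definition _ := gen_choiceMixin tensor.
HB.instance Definition _ :=
  GRing.isZmodule.Build tensor tensor_addA tensor_addC tensor_add0 tensor_addN.

Lemma tensor_of_cat s t : tensor_of (s ++ t) = tensor_of s + tensor_of t.
Proof. by rewrite -tensor_add_of. Qed.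

Lemma tensor_scaleA a b c : tensor_scale a (tensor_scale b c) = tensor_scale (a * b) c.
Proof.
case: (tensorP c) => s ->; rewrite !tensor_scale_of.
by apply: tensor_of_eq => W phi phi_bil; rewrite !big_tscale // scalerA.
Qed.

Lemma tensor_scale1 : left_id 1 tensor_scale.
Proof.
move=> c; case: (tensorP c) => s ->; rewrite tensor_scale_of.
by apply: tensor_of_eq => W phi phi_bil; rewrite big_tscale // scale1r.
Qed.

Lemma tensor_scaleDr : right_distributive tensor_scale +%R.
Proof.
move=> k a b; case: (tensorP a) (tensorP b) => [s ->] [t ->].
rewrite -tensor_of_cat !tensor_scale_of -tensor_of_cat.
by apply: tensor_of_eq => W phi phi_bil; rewrite big_tscale // !big_cat !big_tscale // scalerDr.
Qed.

Lemma tensor_scaleDl c : {morph tensor_scale^~ c : a b / a + b}.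
Proof.
move=> a b; case: (tensorP c) => s ->; rewrite !tensor_scale_of -tensor_of_cat.
by apply: tensor_of_eq => W phi phi_bil; rewrite big_cat !big_tscale // scalerDl.
Qed.

HB.instance Definition _ := GRing.Zmodule_isLmodule.Build K tensor
  tensor_scaleA tensor_scale1 tensor_scaleDr tensor_scaleDl.

Lemma tensor_of_tscale k s : tensor_of (tscale K k s) = k *: tensor_of s.
Proof. by rewrite -tensor_scale_of. Qed.

Definition tensor1 (u : U) (v : V) : tensor := tensor_of [:: (u, v)].

Lemma tensor_of_sum s : tensor_of s = \sum_(p <- s) tensor1 p.1 p.2.
Proof.
elim: s => [|p s IH]; first by rewrite big_nil.
by rewrite big_cons -IH /tensor1 -tensor_of_cat -surjective_pairing.
Qed.

Lemma tensor1_bilinear : bilinear_map K tensor1.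
Proof.
split=> k u u' v; rewrite /tensor1 -tensor_of_tscale -tensor_of_cat;
  apply: tensor_of_eq => W phi phi_bil; rewrite /= !big_cons !big_nil !addr0 /=.
  by rewrite phi_bil.1 (bilinearZl phi_bil).
by rewrite phi_bil.2 (bilinearZl phi_bil).
Qed.

Definition tensor_lift (W : lmodType K) (phi : U -> V -> W) (c : tensor) : W :=
  \sum_(p <- tensor_repr c) phi p.1 p.2.

Variables (W : lmodType K) (phi : U -> V -> W) (phi_bil : bilinear_map K phi).

Lemma tensor_lift_of s : tensor_lift phi (tensor_of s) = \sum_(p <- s) phi p.1 p.2.
Proof. exact: tensor_repr_of. Qed.

Lemma tensor_lift1 u v : tensor_lift phi (tensor1 u v) = phi u v.
Proof. by rewrite tensor_lift_of big_seq1. Qed.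

Lemma tensor_lift_linear : linear (tensor_lift phi).
Proof.
move=> k a b; case: (tensorP a) (tensorP b) => [s ->] [t ->].
by rewrite -tensor_of_tscale -tensor_of_cat !tensor_lift_of big_cat big_tscale.
Qed.

End TensorProduct.

Arguments tensor1_bilinear {K U V}.

Section CofreeComodule.
Variables (K : fieldType) (C : mcoalgebra K) (V : lmodType K) (X : ob C).

Definition cofree_rho (Z Y : ob C) (c : tensor V (mhom C Z X)) :
    seq (tensor V (mhom C Y X) * mhom C Z Y) :=
  flatten [seq [seq (tensor1 p.1 q.1, q.2) | q <- delta C Z Y X p.2] | p <- tensor_repr c].

Section CofreeRhoForm.
Variables (Z Y : ob C) (W : lmodType K).
Variables (phi : tensor V (mhom C Y X) -> mhom C Z Y -> W) (phi_bil : bilinear_map K phi).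

Definition cofree_rho_form (v : V) (h : mhom C Z X) : W :=
  \sum_(q <- delta C Z Y X h) phi (tensor1 v q.1) q.2.

Lemma cofree_rho_form_bilinear : bilinear_map K cofree_rho_form.
Proof.
apply: mk_bilinear_map => [h|v].
  apply: linear_big => q.
  exact: linear_comp (bilinear_mapl tensor1_bilinear q.1) (bilinear_mapl phi_bil q.2).
apply: (linear_big_teq2 (delta_lin K C Z Y X) (phi := fun a b => phi (tensor1 v a) b)).
apply: mk_bilinear_map => [g|f]; last exact: bilinear_mapr.
exact: linear_comp (bilinear_mapr tensor1_bilinear v) (bilinear_mapl phi_bil g).
Qed.

Lemma big_cofree_rho c :
  \sum_(p <- cofree_rho Y c) phi p.1 p.2 = tensor_lift cofree_rho_form c.
Proof. exact: big_flatten_map. Qed.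

Lemma big_cofree_rho_of s :
  \sum_(p <- cofree_rho Y (tensor_of s)) phi p.1 p.2 = \sum_(x <- s) cofree_rho_form x.1 x.2.
Proof. by rewrite big_cofree_rho (tensor_lift_of cofree_rho_form_bilinear). Qed.

Lemma linear_big_cofree_rho : linear (fun c => \sum_(p <- cofree_rho Y c) phi p.1 p.2).
Proof.
move=> k a b; rewrite !big_cofree_rho.
exact: (tensor_lift_linear cofree_rho_form_bilinear).
Qed.

End CofreeRhoForm.

Lemma cofree_rho_lin (Z Y : ob C) k (c d : tensor V (mhom C Z X)) :
  teq2 K (cofree_rho Y (k *: c + d)) (tscale K k (cofree_rho Y c) ++ cofree_rho Y d).
Proof. by move=> W phi phi_bil; rewrite big_cat big_tscale //; apply: linear_big_cofree_rho. Qed.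

Lemma cofree_rho_coassoc (Z0 Z1 Z2 : ob C) (c : tensor V (mhom C Z0 X)) :
  teq3 K (flatten [seq [seq (q.1, q.2, p.2) | q <- cofree_rho Z2 p.1] | p <- cofree_rho Z1 c])
         (flatten [seq [seq (p.1, q.1, q.2) | q <- delta C Z0 Z1 Z2 p.2]
                  | p <- cofree_rho Z2 c]).
Proof.
move=> W phi phi_tri; rewrite [LHS]big_flatten_map [RHS]big_flatten_map /=.
case: (tensorP c) => s ->.
pose G (n : tensor V (mhom C Z1 X)) (g : mhom C Z0 Z1) :=
  \sum_(q <- cofree_rho Z2 n) phi q.1 q.2 g.
pose H (n : tensor V (mhom C Z2 X)) (h : mhom C Z0 Z2) :=
  \sum_(q <- delta C Z0 Z1 Z2 h) phi n q.1 q.2.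
have G_bil : bilinear_map K G.
  apply: mk_bilinear_map => [g|n].
    exact: linear_big_cofree_rho (trilinear_map12 phi_tri g).
  by apply: linear_big => q; apply: trilinear_map3.
have H_bil : bilinear_map K H.
  apply: mk_bilinear_map => [h|n]; first by apply: linear_big => q; apply: trilinear_map1.
  apply: (linear_big_teq2 (delta_lin K C Z0 Z1 Z2)).
  by apply: mk_bilinear_map => [b|a]; [apply: trilinear_map2 | apply: trilinear_map3].
rewrite (big_cofree_rho_of G_bil) (big_cofree_rho_of H_bil); apply: eq_bigr => x _.
rewrite /cofree_rho_form /G /H.
under eq_bigr => q _ do rewrite (big_cofree_rho_of (trilinear_map12 phi_tri q.2)) big_seq1.
have phi_x_tri : trilinear_map K (fun a b c => phi (tensor1 x.1 a) b c).
  apply: mk_trilinear_map => [b d|a d|a b]; last exact: trilinear_map3.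
    exact: linear_comp (bilinear_mapr tensor1_bilinear x.1) (trilinear_map1 phi_tri b d).
  exact: trilinear_map2.
exact: (big_rho_coassoc (M := Hcomod X) x.2 phi_x_tri).
Qed.

Lemma cofree_rho_counit (Z : ob C) (c : tensor V (mhom C Z X)) :
  \sum_(p <- cofree_rho Z c) eps C Z p.2 *: p.1 = c.
Proof.
case: (tensorP c) => s ->.
rewrite (big_cofree_rho_of (bilinear_scaler (eps_lin K C Z))) [RHS]tensor_of_sum.
apply: eq_bigr => x _; rewrite /cofree_rho_form -[in RHS](counitR K C Z X x.2).
rewrite (linear_for_sum _ _ (bilinear_mapr tensor1_bilinear x.1)).
by apply: eq_bigr => q _; rewrite (bilinearZr tensor1_bilinear).
Qed.

Definition cofree_comodule : comodule C :=
  @Comodule K C (fun Z => tensor V (mhom C Z X) : lmodType K) cofree_rho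
    cofree_rho_lin cofree_rho_coassoc cofree_rho_counit.

End CofreeComodule.

Section CofreeMorphisms.
Variables (K : fieldType) (C : mcoalgebra K).

Lemma rho_comodule_morphism (M : comodule C) (X : ob C) :
  comodule_morphism (M := M) (N := cofree_comodule (cm M X) X)
    (fun Z m => tensor_of (rho M Z X m)).
Proof.
split=> [Z k m n | Z Y m W phi phi_bil].
  by rewrite -tensor_of_tscale -tensor_of_cat; apply: tensor_of_eq; apply: rho_lin.
rewrite /= (big_cofree_rho_of phi_bil) big_map /cofree_rho_form.
have phi1_tri : trilinear_map K (fun u b (g : mhom C Z Y) => phi (tensor1 u b) g).
  apply: mk_trilinear_map => [b g|u g|u b]; last exact: bilinear_mapr.
    exact: linear_comp (bilinear_mapl tensor1_bilinear b) (bilinear_mapl phi_bil g).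
  exact: linear_comp (bilinear_mapr tensor1_bilinear u) (bilinear_mapl phi_bil g).
rewrite -(big_rho_coassoc m phi1_tri); apply: eq_bigr => p _.
by rewrite tensor_of_sum (bilinear_suml phi_bil).
Qed.

Lemma tensor1_comodule_morphism (V : lmodType K) (X : ob C) (v : V) :
  comodule_morphism (M := Hcomod X) (N := cofree_comodule V X) (fun Z h => tensor1 v h).
Proof.
split=> [Z | Z Y h W phi phi_bil]; first exact: bilinear_mapr tensor1_bilinear v.
by rewrite /= (big_cofree_rho_of phi_bil) big_seq1 big_map.
Qed.

End CofreeMorphisms.

Lemma alpha_linear (K : fieldType) (C : mcoalgebra K) (A : algType K) (k : K)
    (sigma sigma' : sigma_family C A) (M : comodule C) (X : ob C) (m : cm M X) (a : A) :
  alpha (fun Y f b => k * sigma Y f b + sigma' Y f b) M X m a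
  = k *: alpha sigma M X m a + alpha sigma' M X m a.
Proof.
rewrite /alpha scaler_sumr -big_split; apply: eq_bigr => p _ /=.
by rewrite scalerDl scalerA.
Qed.

Section Alpha.
Variables (K : fieldType) (C : mcoalgebra K) (A : algType K) (E : entwining C A).
Variable sigma : sigma_family C A.
Arguments sigma : clear implicits.
Hypothesis sigma_V1 : in_V1 E sigma.

Lemma alpha_bilinear (M : comodule C) (X : ob C) : bilinear_map K (alpha sigma M X).
Proof.
apply: mk_bilinear_map => [a|m].
  exact: linear_big_teq2 (rho_lin K C M X X)
    (bilinear_scaler (bilinear_forml (sigma_V1.1 X) a)).
by apply: linear_big => p; apply: scalar_scale (bilinear_formr (sigma_V1.1 X) p.2).
Qed.

Lemma big_rho_alpha (M : comodule C) (X Y : ob C) (m : cm M X) (a : A) (W : lmodType K)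
    (phi : cm M Y -> mhom C X Y -> W) : bilinear_map K phi ->
  \sum_(p <- rho M X Y (alpha sigma M X m a)) phi p.1 p.2
  = \sum_(p <- rho M X Y m) phi p.1 (\sum_(q <- delta C X X Y p.2) sigma X q.2 a *: q.1).
Proof.
move=> phi_bil; have rho_phi_lin := linear_big_teq2 (rho_lin K C M X Y) phi_bil.
have sigma_phi_tri : trilinear_map K (fun u b (g : mhom C X X) => sigma X g a *: phi u b).
  apply: mk_trilinear_map => [b g|u g|u b].
  - exact: linear_scale (bilinear_mapl phi_bil b).
  - exact: linear_scale (bilinear_mapr phi_bil u).
  - exact: scalar_scale (bilinear_forml (sigma_V1.1 X) a).
rewrite /alpha (linear_for_sum _ _ rho_phi_lin).
transitivity (\sum_(p <- rho M X X m) \sum_(q <- rho M X Y p.1) sigma X p.2 a *: phi q.1 q.2).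
  by apply: eq_bigr => p _; rewrite (scalable_linear rho_phi_lin); apply: scaler_sumr.
rewrite (big_rho_coassoc m sigma_phi_tri).
apply: eq_bigr => p _; rewrite (bilinear_sumr phi_bil).
by apply: eq_bigr => q _; rewrite (bilinearZr phi_bil).
Qed.

Lemma big_rho_alpha_psi (M : comodule C) (X Y : ob C) (m : cm M X) (a : A)
    (W : lmodType K) (phi : cm M Y -> mhom C X Y -> W) : bilinear_map K phi ->
  \sum_(p <- rho M X Y m) \sum_(q <- psi E X Y p.2 a) phi (alpha sigma M Y p.1 q.1) q.2
  = \sum_(p <- rho M X Y m) phi p.1
      (\sum_(q <- delta C X Y Y p.2) \sum_(r <- psi E X Y q.2 a) sigma Y q.1 r.1 *: r.2).
Proof.
move=> phi_bil.
have psi_phi_tri : trilinear_map K (fun u (g : mhom C Y Y) (h : mhom C X Y) =>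
    \sum_(r <- psi E X Y h a) sigma Y g r.1 *: phi u r.2).
  apply: mk_trilinear_map => [g h|u h|u g].
  - by apply: linear_big => r; apply: linear_scale (bilinear_mapl phi_bil r.2).
  - by apply: linear_big => r; apply: scalar_scale (bilinear_forml (sigma_V1.1 Y) r.1).
  - apply: (linear_big_teq2 (fun k f f' => psi_linl K C A E X Y k f f' a)
      (phi := fun b h => sigma Y g b *: phi u h)).
    apply: mk_bilinear_map => [h|b]; first exact: scalar_scale (bilinear_formr (sigma_V1.1 Y) g).
    exact: linear_scale (bilinear_mapr phi_bil u).
transitivity (\sum_(p <- rho M X Y m) \sum_(q <- rho M Y Y p.1)
                \sum_(r <- psi E X Y p.2 a) sigma Y q.2 r.1 *: phi q.1 r.2).
  apply: eq_bigr => p _; rewrite exchange_big; apply: eq_bigr => r _.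
  rewrite /alpha (bilinear_suml phi_bil).
  by apply: eq_bigr => q _; rewrite (bilinearZl phi_bil).
rewrite (big_rho_coassoc m psi_phi_tri).
apply: eq_bigr => p _; rewrite (bilinear_sumr phi_bil); apply: eq_bigr => q _.
rewrite (bilinear_sumr phi_bil).
by apply: eq_bigr => r _; rewrite (bilinearZr phi_bil).
Qed.

Lemma alpha_is_nat : is_nat E (alpha sigma).
Proof.
split; first exact: alpha_bilinear.
split=> [M X Y m a W phi phi_bil | M N g [g_lin g_rho] X m a].
  rewrite (big_rho_alpha _ _ phi_bil) big_flatten_map (big_rho_alpha_psi _ _ phi_bil).
  by apply: eq_bigr => p _; rewrite sigma_V1.2.
rewrite /alpha (g_rho X X m _ _ (bilinear_scaler (bilinear_forml (sigma_V1.1 X) a))).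
rewrite big_map (linear_for_sum _ _ (g_lin X)).
by apply: eq_bigr => p _; rewrite (scalable_linear (g_lin X)).
Qed.

Lemma alphaK (X : ob C) (f : mhom C X X) (a : A) : beta (alpha sigma) X f a = sigma X f a.
Proof.
have sigma_lin := bilinear_forml (sigma_V1.1 X) a.
rewrite /beta /alpha /= (linear_for_sum _ _ (eps_lin K C X)).
rewrite -[in RHS](counitL K C X X f) (linear_for_sum _ _ sigma_lin).
apply: eq_bigr => p _.
by rewrite (scalable_linear (eps_lin K C X)) (scalable_linear sigma_lin); apply: mulrC.
Qed.

End Alpha.

Section Beta.
Variables (K : fieldType) (C : mcoalgebra K) (A : algType K) (E : entwining C A).
Variable tau : nat_family C A.
Arguments tau : clear implicits.
Hypothesis tau_nat : is_nat E tau.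

Lemma betaK (M : comodule C) (X : ob C) (m : cm M X) (a : A) :
  alpha (beta tau) M X m a = tau M X m a.
Proof.
have [tau_bil [_ tau_natural]] := tau_nat.
pose N := cofree_comodule (cm M X) X.
have counit_bil := bilinear_scaler (U := cm M X) (eps_lin K C X).
have counit_rho (m' : cm M X) :
    tensor_lift (fun v (h : mhom C X X) => eps C X h *: v) (tensor_of (rho M X X m')) = m'.
  by rewrite (tensor_lift_of counit_bil) rho_counit.
rewrite -[tau M X m a]counit_rho.
have /= <- := tau_natural M N _ (rho_comodule_morphism M X) X m a.
rewrite tensor_of_sum (linear_for_sum _ _ (bilinear_mapl (tau_bil N X) a)).
rewrite (linear_for_sum _ _ (tensor_lift_linear counit_bil)); apply: eq_bigr => p _.
have /= -> := tau_natural _ N _ (tensor1_comodule_morphism X p.1) X p.2 a.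
by rewrite tensor_lift1.
Qed.

Lemma beta_in_V1 : in_V1 E (beta tau).
Proof.
have [tau_bil [tau_rho _]] := tau_nat.
split=> [X | X Y f a].
  have [taul taur] := tau_bil (Hcomod X) X.
  by split=> k u u' v; rewrite /beta ?taul ?taur eps_lin.
have := tau_rho (Hcomod Y) X Y f a _ _ (bilinear_scalel (V := mhom C X Y) (eps_lin K C Y)).
rewrite /= counitL big_flatten_map /beta => <-.
by rewrite -betaK.
Qed.

End Beta.

Unset Implicit Arguments.
Set Strict Implicit.

Theorem proposition4p4 (K : fieldType) (C : mcoalgebra K) (A : algType K)
    (E : entwining C A) :
  (* alpha maps V_1 into Nat(G_psi F_psi, id) *)
  (forall sigma : sigma_family C A, in_V1 E sigma -> is_nat E (alpha sigma)) /\
  (* alpha is linear *)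
  (forall (k : K) (sigma sigma' : sigma_family C A)
          (M : comodule C) (X : ob C) (m : cm M X) (a : A),
     alpha (fun Y f b => k * sigma Y f b + sigma' Y f b) M X m a
     = k *: alpha sigma M X m a + alpha sigma' M X m a) /\
  (* beta maps Nat(G_psi F_psi, id) into V_1 *)
  (forall tau : nat_family C A, is_nat E tau -> in_V1 E (beta tau)) /\
  (* beta o alpha = id on V_1 *)
  (forall sigma : sigma_family C A, in_V1 E sigma ->
     forall (X : ob C) (f : mhom C X X) (a : A), beta (alpha sigma) X f a = sigma X f a) /\
  (* alpha o beta = id on Nat(G_psi F_psi, id) *)
  (forall tau : nat_family C A, is_nat E tau ->
     forall (M : comodule C) (X : ob C) (m : cm M X) (a : A),
       alpha (beta tau) M X m a = tau M X m a).
Proof.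
split; first exact: alpha_is_nat.
split; first exact: alpha_linear.
split; first exact: beta_in_V1.
split; first exact: alphaK.
exact: betaK.
Qed.
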